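(* Let $X$ be a topological space and let $\mathrm{Fer}(X)$ denote the set of closed subsets of $X$. For $W\in\mathrm{Fer}(X)$ put $\mathfrak{Z}(W)=\{Z\in\mathrm{Fer}(X)\mid Z\supseteq W\}$. For $W_1,W_2\in\mathrm{Fer}(X)$ with $W_1\subseteq W_2$, define $\delta^{W_2}_{W_1}:\mathfrak{Z}(W_1)\to\mathfrak{Z}(W_2)$ by $\delta^{W_2}_{W_1}(Z)=Z\cup W_2$. Then $\mathfrak{Z}$, together with the maps $\delta^{W_2}_{W_1}$, is a conciliation in $X$.
   Context: A pre-conciliation $G$ in a topological space $X$ consists of a set $G(W)$ for each closed set $W\in\mathrm{Fer}(X)$, and for all closed $W_1\subseteq W_2$ a map (called a mediation) $\delta^{W_2}_{W_1}:G(W_1)\to G(W_2)$, such that $\delta^W_W$ is the identity map of $G(W)$ for every closed $W$, and $\delta^{W_3}_{W_2}\circ\delta^{W_2}_{W_1}=\delta^{W_3}_{W_1}$ whenever $W_1\subseteq W_2\subseteq W_3$ are closed. A family $(W_i)_{i\in I}$ is a finite closed co-covering of $W\in\mathrm{Fer}(X)$ if $I$ is finite, each $W_i$ is closed, and $W=\bigcap_{i\in I}W_i$. A pre-conciliation $G$ is unified if for every nonempty closed $W$, every finite closed co-covering $(W_i)_{i\in I}$ of $W$, and all $t,s\in G(W)$: if $\delta^{W_j}_W(t)=\delta^{W_j}_W(s)$ for all $j\in I$, then $t=s$. A unified pre-conciliation $G$ is a conciliation if for every nonempty closed $W$, every finite closed co-covering $(W_i)_{i\in I}$ of $W$, and every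 family $(t_i)_{i\in I}$ with $t_i\in G(W_i)$ satisfying $\delta^{W_i\cup W_j}_{W_i}(t_i)=\delta^{W_i\cup W_j}_{W_j}(t_j)$ for all $i,j\in I$, there exists a unique $t\in G(W)$ with $\delta^{W_i}_W(t)=t_i$ for all $i\in I$. *)

From mathcomp Require Import all_boot all_order.
From mathcomp Require Import all_classical all_reals all_analysis.
Unset Printing Implicit Defensive.
Local Open Scope classical_set_scope.

Definition Fer (X : topologicalType) := {W : set X | closed W}.

Definition ferU (X : topologicalType) (A B : Fer X) : Fer X :=
  exist _ (sval A `|` sval B) (@closedU X _ _ (proj2_sig A) (proj2_sig B)).

Section Conc.
Variable X : topologicalType.
(* G W = G(W); delta W1 W2 = the mediation delta^{W2}_{W1} : G(W1) -> G(W2).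
   delta is given as a total function; only its values for W1 ⊆ W2 matter. *)
Variables (G : Fer X -> Type) (delta : forall W1 W2 : Fer X, G W1 -> G W2).

Definition is_preconciliation : Prop :=
  (forall (W : Fer X) (t : G W), delta W W t = t) /\
  (forall W1 W2 W3 : Fer X, sval W1 `<=` sval W2 -> sval W2 `<=` sval W3 ->
     forall t : G W1, delta W2 W3 (delta W1 W2 t) = delta W1 W3 t).

Definition co_covering (W : Fer X) (I : finType) (Wi : I -> Fer X) : Prop :=
  sval W = \bigcap_i sval (Wi i).

Definition is_unified : Prop :=
  is_preconciliation /\
  forall (W : Fer X), sval W !=set0 ->
  forall (I : finType) (Wi : I -> Fer X), co_covering W I Wi ->
  forall t s : G W, (forall j, delta W (Wi j) t = delta W (Wi j) s) -> t = s.

Definition is_conciliation : Prop :=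
  is_unified /\
  forall (W : Fer X), sval W !=set0 ->
  forall (I : finType) (Wi : I -> Fer X), co_covering W I Wi ->
  forall ti : forall i, G (Wi i),
    (forall i j, delta (Wi i) (ferU X (Wi i) (Wi j)) (ti i) =
                 delta (Wi j) (ferU X (Wi i) (Wi j)) (ti j)) ->
    exists! t : G W, forall i, delta W (Wi i) t = ti i.
End Conc.

Definition ZG (X : topologicalType) (W : Fer X) : Type :=
  {Z : Fer X | sval W `<=` sval Z}.

Definition Zdelta (X : topologicalType) (W1 W2 : Fer X) (Z : ZG X W1) : ZG X W2 :=
  exist _ (ferU X (sval Z) W2) (@subsetUr _ (sval (sval Z)) (sval W2)).

From mathcomp Require Import all_boot all_order.
From mathcomp Require Import all_classical all_reals all_analysis.

(* If W is the intersection of the W_i and Z contains W, then Z is the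
   intersection of the Z ∪ W_i, since union distributes over intersection.
   This gives uniqueness, and glues compatible Z_i ⊇ W_i to their intersection:
   compatibility Z_i ∪ W_j = Z_j ∪ W_i yields (∩_j Z_j) ∪ W_i = ∩_j (Z_i ∪ W_j)
   = Z_i ∪ W = Z_i. *)

Local Open Scope classical_set_scope.

Section ClosedSupersets.
Variable X : topologicalType.

Lemma ZG_ext (W : Fer X) (z1 z2 : ZG X W) :
  sval (sval z1) = sval (sval z2) -> z1 = z2.
Proof.
case: z1 z2 => [[A cA] WA] [[B cB] WB] /= eqAB; subst B.
by rewrite (Prop_irrelevance cA cB) (Prop_irrelevance WA WB).
Qed.

Lemma setU_ZG_base (W : Fer X) (z : ZG X W) :
  sval (sval z) `|` sval W = sval (sval z).
Proof. exact/setUidPl/(proj2_sig z). Qed.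

Lemma Zdelta_id (W : Fer X) (z : ZG X W) : Zdelta X W W z = z.
Proof. exact/ZG_ext/setU_ZG_base. Qed.

Lemma Zdelta_comp (W1 W2 W3 : Fer X) (z : ZG X W1) :
  sval W2 `<=` sval W3 ->
  Zdelta X W2 W3 (Zdelta X W1 W2 z) = Zdelta X W1 W3 z.
Proof.
by move=> W23; apply: ZG_ext => /=; rewrite -setUA ((setUidPr _ _).2 W23).
Qed.

Lemma ZG_preconciliation : is_preconciliation X (@ZG X) (@Zdelta X).
Proof. by split=> [|W1 W2 W3 _ W23 z]; [exact: Zdelta_id | exact: Zdelta_comp]. Qed.

Lemma ZG_bigcap_Zdelta {W : Fer X} {I : finType} {Wi : I -> Fer X}
    (z : ZG X W) :
  co_covering X W I Wi ->
  sval (sval z) = \bigcap_i sval (sval (Zdelta X W (Wi i) z)).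
Proof. by move=> cov; rewrite /= -setU_bigcapr -cov setU_ZG_base. Qed.

Lemma ZG_unified : is_unified X (@ZG X) (@Zdelta X).
Proof.
split; first exact: ZG_preconciliation.
move=> W _ I Wi cov z1 z2 eq_delta; apply: ZG_ext.
rewrite (ZG_bigcap_Zdelta z1 cov) (ZG_bigcap_Zdelta z2 cov).
by apply: eq_bigcapr => i _; rewrite eq_delta.
Qed.

Section Gluing.
Variables (W : Fer X) (I : finType) (Wi : I -> Fer X).
Hypothesis cov : co_covering X W I Wi.
Variable zi : forall i, ZG X (Wi i).
Hypothesis compat : forall i j,
  Zdelta X (Wi i) (ferU X (Wi i) (Wi j)) (zi i) =
  Zdelta X (Wi j) (ferU X (Wi i) (Wi j)) (zi j).

Lemma ZG_compat_setU i j :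
  sval (sval (zi i)) `|` sval (Wi j) = sval (sval (zi j)) `|` sval (Wi i).
Proof.
have /(congr1 (fun z => sval (sval z))) /= := compat i j.
by rewrite setUA setU_ZG_base [sval (Wi i) `|` _]setUC setUA setU_ZG_base.
Qed.

Definition Zglue_set : set X := \bigcap_i sval (sval (zi i)).

Lemma closed_Zglue_set : closed Zglue_set.
Proof. by apply: closed_bigI => i _; exact: proj2_sig (sval (zi i)). Qed.

Lemma Zglue_set_sup : sval W `<=` Zglue_set.
Proof. by rewrite cov => x Wx i _; apply: (proj2_sig (zi i)); exact: Wx. Qed.

Definition Zglue : ZG X W :=
  exist _ (exist _ Zglue_set closed_Zglue_set) Zglue_set_sup.

Lemma Zdelta_Zglue i : Zdelta X W (Wi i) Zglue = zi i.
Proof.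
apply: ZG_ext; rewrite /= /Zglue_set setU_bigcapl.
under eq_bigcapr do rewrite -ZG_compat_setU.
by rewrite -setU_bigcapr -cov; apply/setUidPl; rewrite cov => x Wx;
  apply: (proj2_sig (zi i)); exact: Wx.
Qed.

End Gluing.

End ClosedSupersets.

Arguments Zglue {X W I Wi} cov zi.
Arguments Zdelta_Zglue {X W I Wi} cov {zi} compat i.

Theorem mainTheorem1 (X : topologicalType) :
  is_conciliation X (@ZG X) (@Zdelta X).
Proof.
split; first exact: ZG_unified.
move=> W W_neq0 I Wi cov zi compat.
exists (Zglue cov zi); split=> [i | z delta_z]; first exact: Zdelta_Zglue.
apply: ((ZG_unified X).2 W W_neq0 I Wi cov) => i.
by rewrite delta_z (Zdelta_Zglue cov compat).
Qed.
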